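(* For every integer $p \ge 1$ there exist an integer $k$ and a $k$-colourable $(4K_1, C_4, \text{claw})$-free graph $G$ that is not $(k+p)$-mixing.
   Context: All graphs are finite and simple. A $k$-colouring of $G$ is a map $\alpha: V(G)\to\{1,\dots,k\}$ with $\alpha(u)\neq\alpha(v)$ for every edge $uv$; $G$ is $k$-colourable if one exists. The reconfiguration graph $\mathcal{R}_k(G)$ has the $k$-colourings of $G$ as vertices, two being adjacent if they differ on exactly one vertex; $G$ is $k$-mixing if $\mathcal{R}_k(G)$ is connected. A graph is $\mathcal{H}$-free for a set $\mathcal{H}$ of graphs if it contains no induced subgraph isomorphic to any member of $\mathcal{H}$. $4K_1$ is the edgeless graph on 4 vertices, $C_4$ the 4-cycle, and the claw is $K_{1,3}$. *)

From mathcomp Require Import all_boot.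
Set Implicit Arguments. Unset Strict Implicit. Unset Printing Implicit Defensive.

Definition simple_graph (T : finType) (e : rel T) : Prop :=
  symmetric e /\ irreflexive e.

Definition proper_colouring (T : finType) (e : rel T) (k : nat)
  (a : {ffun T -> 'I_k}) : bool :=
  [forall u, forall v, e u v ==> (a u != a v)].

Definition colourable (T : finType) (e : rel T) (k : nat) : Prop :=
  exists a : {ffun T -> 'I_k}, proper_colouring e a.

Definition recolour_step (T : finType) (e : rel T) (k : nat)
  (a b : {ffun T -> 'I_k}) : bool :=
  [&& proper_colouring e a, proper_colouring e b &
      #|[set v | a v != b v]| == 1].

Definition mixing (T : finType) (e : rel T) (k : nat) : Prop :=
  forall a b : {ffun T -> 'I_k}, proper_colouring e a -> proper_colouring e b ->
    connect (@recolour_step T e k) a b.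

Definition has_induced (T : finType) (e : rel T) (n : nat) (h : rel 'I_n) : Prop :=
  exists f : 'I_n -> T, injective f /\ forall i j, e (f i) (f j) = h i j.

Definition K1x4 : rel 'I_4 := fun _ _ => false.
Definition C4 : rel 'I_4 :=
  fun i j => ((i.+1 %% 4 == j) || (j.+1 %% 4 == i)).
Definition claw : rel 'I_4 :=
  fun i j => (i != j) && ((val i == 0) || (val j == 0)).

Definition free_4K1_C4_claw (T : finType) (e : rel T) : Prop :=
  ~ has_induced e K1x4 /\ ~ has_induced e C4 /\ ~ has_induced e claw.

(* Take G = C_n^r, the r-th power of the n-cycle, with n = 12p + 6 and r = 3p + 1,
   so that 4r < n < 4r + 4.  Four vertices at pairwise circular distance > r would need
   n >= 4(r + 1), an induced C_4 would need n <= 4r, and of three neighbours of a vertex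
   two lie on the same side of it and are adjacent, so G is (4K_1, C_4, claw)-free.
   Colouring by residue mod 4p + 2 is proper because 4p + 2 divides n and exceeds r, so
   G is k-colourable for k = 5p + 3.  Colouring by residue mod k + p = 6p + 3 = n/2 gives
   each colour to an antipodal pair, and every other vertex is within distance
   (6p + 3)/2 <= r of one vertex of the pair: no vertex can be recoloured, so this
   colouring is isolated in R_(k+p)(G). *)

From mathcomp Require Import all_boot zify.

Set Implicit Arguments. Unset Strict Implicit. Unset Printing Implicit Defensive.

Section Colourings.
Variables (T : finType) (e : rel T).

Definition widen_colouring k k' (le_kk' : k <= k') (a : {ffun T -> 'I_k}) :
  {ffun T -> 'I_k'} := [ffun v => widen_ord le_kk' (a v)].

Lemma widen_colouring_proper k k' (le_kk' : k <= k') (a : {ffun T -> 'I_k}) :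
  proper_colouring e a -> proper_colouring e (widen_colouring le_kk' a).
Proof.
move=> /forallP a_proper; apply/forallP => u; apply/forallP => v.
by rewrite !ffunE -val_eqE val_eqE; have /forallP := a_proper u; apply.
Qed.

Definition frozen k (a : {ffun T -> 'I_k}) : Prop :=
  forall v (c : 'I_k), c != a v -> exists2 u, e v u & a u = c.

Lemma frozen_recolour_step k (a b : {ffun T -> 'I_k}) :
  frozen a -> ~~ recolour_step e a b.
Proof.
move=> a_frozen; apply/negP => /and3P[_ /forallP b_proper /cards1P[v diff_v]].
have diff_vE u : (a u != b u) = (u == v).
  by rewrite -in_set1 -diff_v inE.
have bv_neq : b v != a v by rewrite eq_sym diff_vE.
have [u e_vu au_bv] := a_frozen v (b v) bv_neq.
have u_neq : u != v by apply: contra_neq bv_neq => u_v; rewrite -au_bv u_v.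
have bu_au : b u = a u by apply/esym/eqP/negbNE; rewrite diff_vE.
have /forallP/(_ u)/implyP/(_ e_vu) := b_proper v.
by rewrite bu_au au_bv eqxx.
Qed.

Lemma frozen_not_mixing k (a b : {ffun T -> 'I_k}) :
  proper_colouring e a -> frozen a -> proper_colouring e b -> a != b ->
  ~ mixing e k.
Proof.
move=> a_proper a_frozen b_proper a_neq_b /(_ a b a_proper b_proper) /connectP.
case=> [[|c s] /= path_s b_last]; first by rewrite b_last eqxx in a_neq_b.
case/andP: path_s => step_ac _.
by rewrite (negbTE (frozen_recolour_step _ a_frozen)) in step_ac.
Qed.

End Colourings.

Definition distn (x y : nat) : nat := (x - y) + (y - x).
Definition cycle_distn (n x y : nat) : nat := minn (distn x y) (n - distn x y).
Definition cycle_power (n r : nat) : rel 'I_n := fun x y => 0 < cycle_distn n x y <= r.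
Arguments cycle_power : clear implicits.

Definition mod_colouring n q (q_gt0 : 0 < q) : {ffun 'I_n -> 'I_q} :=
  [ffun x : 'I_n => Ordinal (ltn_pmod x q_gt0)].
Arguments mod_colouring {n q}.

Section CyclePower.
Variables n r : nat.
Local Notation adj := (cycle_power n r).

Lemma cycle_power_sym : symmetric adj.
Proof. by move=> x y; rewrite /cycle_power /cycle_distn /distn addnC. Qed.

Lemma cycle_power_irr : irreflexive adj.
Proof. by move=> x; rewrite /cycle_power /cycle_distn /distn subnn addn0 min0n. Qed.

Lemma cycle_power_simple : simple_graph adj.
Proof. by split; [apply: cycle_power_sym | apply: cycle_power_irr]. Qed.

Lemma cycle_powerE x y : adj x y =
  (x != y :> nat) && [|| (x <= y + r) && (y <= x + r), x + n <= y + r | y + n <= x + r].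
Proof.
have := ltn_ord x; have := ltn_ord y.
rewrite /cycle_power /cycle_distn /distn; lia.
Qed.

Lemma cycle_power_lt (x y : 'I_n) :
  x < y -> adj x y = (y <= x + r) || (x + n <= y + r).
Proof.
move=> lt_xy; rewrite cycle_powerE; lia.
Qed.

Ltac case_order x y :=
  let h := fresh "h" in
  case: (ltngtP x y) => [h|h|/val_inj h];
  [ rewrite ?(cycle_power_lt h)
  | rewrite ?(cycle_power_sym x y) ?(cycle_power_lt h)
  | subst y; by rewrite ?eqxx ?cycle_power_irr ].

Lemma cycle_power_claw_free a b c d : adj a b -> adj a c -> adj a d ->
  b != c -> b != d -> c != d -> [|| adj b c, adj b d | adj c d].
Proof.
have la := ltn_ord a; have lb := ltn_ord b; have lc := ltn_ord c; have ld := ltn_ord d.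
case_order a b; case_order a c; case_order a d; case_order b c; case_order b d; case_order c d.
all: lia.
Qed.

Lemma cycle_power_4K1_free a b c d : n < 4 * r + 4 ->
  a != b -> a != c -> a != d -> b != c -> b != d -> c != d ->
  [|| adj a b, adj a c, adj a d, adj b c, adj b d | adj c d].
Proof.
have la := ltn_ord a; have lb := ltn_ord b; have lc := ltn_ord c; have ld := ltn_ord d.
case_order a b; case_order a c; case_order a d; case_order b c; case_order b d; case_order c d.
(* Stating the negated goal as linear facts keeps lia from splitting on booleans. *)
all: move=> ? _ _ _ _ _ _; apply/negPn/negP; rewrite !negb_or -!ltnNge; lia.
Qed.

Lemma cycle_power_C4_free a b c d : 4 * r < n ->
  adj a b -> adj b c -> adj c d -> adj d a -> a != c -> b != d -> adj a c || adj b d.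
Proof.
have la := ltn_ord a; have lb := ltn_ord b; have lc := ltn_ord c; have ld := ltn_ord d.
case_order a b; case_order b c; case_order c d; case_order d a; case_order a c; case_order b d.
all: lia.
Qed.

Local Notation pt4 i := (@Ordinal 4 i isT).

Lemma cycle_power_4K1_C4_claw_free : 4 * r < n < 4 * r + 4 -> free_4K1_C4_claw adj.
Proof.
case/andP=> n_gt n_lt.
split; [|split] => -[f [f_inj f_induced]].
- have := cycle_power_4K1_free
    (a := f (pt4 0)) (b := f (pt4 1)) (c := f (pt4 2)) (d := f (pt4 3)) n_lt.
  by rewrite !(inj_eq f_inj) !f_induced => /(_ isT isT isT isT isT isT).
- have := cycle_power_C4_free
    (a := f (pt4 0)) (b := f (pt4 1)) (c := f (pt4 2)) (d := f (pt4 3)) n_gt.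
  by rewrite !(inj_eq f_inj) !f_induced => /(_ isT isT isT isT isT isT).
- have := cycle_power_claw_free
    (a := f (pt4 0)) (b := f (pt4 1)) (c := f (pt4 2)) (d := f (pt4 3)).
  by rewrite !(inj_eq f_inj) !f_induced => /(_ isT isT isT isT isT isT).
Qed.

Lemma mod_colouringE q (q_gt0 : 0 < q) (x : 'I_n) :
  val (mod_colouring q_gt0 x) = x %% q.
Proof. by rewrite ffunE. Qed.

Lemma mod_colouring_proper q (q_gt0 : 0 < q) :
  q %| n -> r < q -> proper_colouring adj (mod_colouring q_gt0).
Proof.
move=> q_dvd_n r_lt_q; apply/forallP => x; apply/forallP => y; apply/implyP.
wlog lt_xy : x y / x < y => [wlog_lt|].
  case: (ltngtP x y) => [/wlog_lt //|lt_yx|/val_inj <-]; last by rewrite cycle_power_irr.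
  by rewrite cycle_power_sym eq_sym; apply: wlog_lt.
rewrite cycle_power_lt // -val_eqE !mod_colouringE eq_sym eqn_mod_dvd ?(ltnW lt_xy) //.
have lt_yn := ltn_ord y.
apply: contraL => q_dvd_gap.
have le_q_gap : q <= y - x by apply: dvdn_leq; first lia.
have le_q_cogap : q <= n - (y - x) by apply: dvdn_leq; [lia | apply: dvdn_sub].
rewrite negb_or -!ltnNge; lia.
Qed.

Lemma mod_colouring_frozen q (q_gt0 : 0 < q) :
  n = 2 * q -> q <= 2 * r + 1 -> frozen adj (mod_colouring q_gt0).
Proof.
(* The vertices of colour c are c and c + q, antipodal on the cycle. *)
move=> n_eq q_le v c; rewrite -val_eqE mod_colouringE => c_neq.
have lt_vn := ltn_ord v; have lt_cq := ltn_ord c.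
have v_mod : v %% q = if v < q then val v else v - q.
  case: ltnP => [/modn_small // | le_qv].
  by rewrite -{1}(subnK le_qv) modnDr modn_small //; lia.
have lt_cn : c < n by lia.
have lt_cqn : c + q < n by lia.
have [adj_vc | nadj_vc] := boolP (adj v (Ordinal lt_cn)).
  by exists (Ordinal lt_cn) => //; apply/val_inj; rewrite mod_colouringE /= modn_small.
exists (Ordinal lt_cqn); last by apply/val_inj; rewrite mod_colouringE /= modnDr modn_small.
move: nadj_vc c_neq; rewrite !cycle_powerE v_mod /=; case: ifP; lia.
Qed.

End CyclePower.

Theorem theorem4 (p : nat) (hp : 1 <= p) :
  exists (k : nat) (T : finType) (e : rel T),
    [/\ simple_graph e, colourable e k, free_4K1_C4_claw e & ~ mixing e (k + p)].
Proof.
set n := 12 * p + 6; set r := 3 * p + 1.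
have gamma_gt0 : 0 < 4 * p + 2 by lia.
have alpha_gt0 : 0 < 5 * p + 3 + p by lia.
have gamma_proper : proper_colouring (cycle_power n r) (mod_colouring gamma_gt0).
  by apply: mod_colouring_proper; [apply/dvdnP; exists 3 | ]; lia.
exists (5 * p + 3), 'I_n, (cycle_power n r); split.
- exact: cycle_power_simple.
- have le_colours : 4 * p + 2 <= 5 * p + 3 by lia.
  by exists (widen_colouring le_colours (mod_colouring gamma_gt0)); apply: widen_colouring_proper.
- by apply: cycle_power_4K1_C4_claw_free; lia.
- have le_colours : 4 * p + 2 <= 5 * p + 3 + p by lia.
  apply: (@frozen_not_mixing _ _ _ (mod_colouring alpha_gt0)
           (widen_colouring le_colours (mod_colouring gamma_gt0))).
  + by apply: mod_colouring_proper; [apply/dvdnP; exists 2 | ]; lia.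
  + by apply: mod_colouring_frozen; lia.
  + exact: widen_colouring_proper.
  + have lt_vn : 4 * p + 2 < n by lia.
    apply/eqP => /ffunP/(_ (Ordinal lt_vn))/(congr1 val).
    by rewrite mod_colouringE ffunE /= mod_colouringE modnn modn_small //; lia.
Qed.
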